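(* Let $p$ be a prime and $q\in\mathbb{N}$, and let $n=pq$ or $n=pq+1$. Then the fixed point space $C_n(\mathbb{C})^{\mathbb{Z}/p}$ is homeomorphic to $C_q(\mathbb{C}^* )$.
   Context: $C_n(Y)$ denotes the unordered configuration space of $n$ distinct points in $Y$. The group $\mathbb{Z}/p$, generated by $\zeta=e^{2\pi i/p}$, acts on $C_n(\mathbb{C})$ by rotation: $\{z_1,\dots,z_n\}\mapsto\{\zeta z_1,\dots,\zeta z_n\}$. *)

(* The complex plane C is modelled as R * R
   (R : realType) with the library's product topology. *)
From HB Require Import structures.
From mathcomp Require Import all_boot all_order all_algebra.
From mathcomp Require Import all_classical all_reals all_analysis.
Unset Printing Implicit Defensive.
Import numFieldNormedType.Exports.
Import Order.TTheory GRing.Theory Num.Theory.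
Local Open Scope classical_set_scope.
Local Open Scope ring_scope.

Definition prodn_open {X : topologicalType} (n : nat) (O : set ('I_n -> X)) : Prop :=
  forall x, O x -> exists U : 'I_n -> set X,
    (forall i, open (U i) /\ U i (x i)) /\ [set y | forall i, U i (y i)] `<=` O.

Definition conf_ord {X : topologicalType} (Y : set X) (n : nat) : set ('I_n -> X) :=
  [set x | injective x /\ forall i, Y (x i)].

Definition conf {X : topologicalType} (Y : set X) (n : nat) : set (set X) :=
  (fun x : 'I_n -> X => range x) @` conf_ord Y n.

(* Quotient topology on C_n(Y) induced by F_n(Y) -> C_n(Y), x |-> {x_1..x_n}:
   U ⊆ C_n(Y) is open iff its preimage is open in F_n(Y) (subspace of X^n). *)
Definition conf_opens {X : topologicalType} (Y : set X) (n : nat) : set (set (set X)) :=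
  [set U | U `<=` conf Y n /\
    exists V, prodn_open n V /\
      V `&` conf_ord Y n = (fun x : 'I_n -> X => range x) @^-1` U `&` conf_ord Y n].

Definition subspace_opens {T : Type} (A : set T) (tX : set (set T)) : set (set T) :=
  [set O | exists V, tX V /\ O = V `&` A].

Definition homeomorphic {T U : Type} (A : set T) (tA : set (set T))
    (B : set U) (tB : set (set U)) : Prop :=
  exists (f : T -> U) (g : U -> T),
    (forall a, A a -> B (f a)) /\ (forall b, B b -> A (g b)) /\
    (forall a, A a -> g (f a) = a) /\ (forall b, B b -> f (g b) = b) /\
    (forall O, tB O -> tA (f @^-1` O `&` A)) /\
    (forall O, tA O -> tB (g @^-1` O `&` B)).

(* Multiplication by zeta = exp(2 pi i / p) on C = R * R. *)
Definition rotC {R : realType} (p : nat) (z : R * R) : R * R :=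
  let c := cos (2 * pi / p%:R) in
  let s := sin (2 * pi / p%:R) in
  (c * z.1 - s * z.2, s * z.1 + c * z.2).

Definition Cstar (R : realType) : set (R * R) := [set z | z <> (0, 0)].

(* Fixed point set C_n(C)^{Z/p}: configurations S with zeta S = S
   (invariance under the generator = invariance under Z/p). *)
Definition fixed_conf (R : realType) (p n : nat) : set (set (R * R)) :=
  [set S | conf [set: R * R] n S /\ rotC p @` S = S].

Definition fixed_conf_opens (R : realType) (p n : nat) : set (set (set (R * R))) :=
  subspace_opens (fixed_conf R p n) (conf_opens [set: R * R] n).

From HB Require Import structures.
From mathcomp Require Import all_boot all_order all_algebra.
From mathcomp Require Import all_classical all_reals all_analysis.
From mathcomp Require Import lra.
Import numFieldNormedType.Exports.
Import Order.TTheory GRing.Theory Num.Theory.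
Local Open Scope classical_set_scope.
Local Open Scope ring_scope.

(* A configuration S fixed by the rotation w |-> zeta w, zeta = exp(2 pi i/p),
   is a union of rotation orbits, each of exactly p points because p is prime,
   together possibly with the origin; w |-> w ^ p collapses every orbit to one
   point of C^*.  So S |-> {w ^ p | 0 <> w \in S} is a bijection onto C_q(C^* ),
   whose inverse takes T to its preimage under w |-> w ^ p, plus the origin
   when n = p q + 1; counting points shows which case occurs.  Continuity of
   the inverse comes from prod_k (w - zeta^k z) = w ^ p - z ^ p: some p-th root
   of a point close to z ^ p is close to z.  Continuity of the direct map needs
   that the points of a nearby fixed configuration stay matched, orbit by orbit,
   with those of S, which holds once they are closer than half the minimal
   distance between points of S. *)

(* The [complex] of the real_closed library is universe-inconsistent with the
   definitions used here, so C = R[i] is rebuilt as a record. *)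
Record complex (R : Type) : Type := Complex { Re : R; Im : R }.
Arguments Complex {R}.
Arguments Re {R}.
Arguments Im {R}.

Definition toC {R : Type} (w : R * R) : complex R := Complex w.1 w.2.
Definition ofC {R : Type} (z : complex R) : R * R := (Re z, Im z).

Lemma toCK {R : Type} : cancel (@toC R) ofC. Proof. by case. Qed.
Lemma ofCK {R : Type} : cancel (@ofC R) toC. Proof. by case. Qed.

HB.instance Definition _ (R : eqType) := Equality.copy (complex R) (can_type (@ofCK R)).
HB.instance Definition _ (R : choiceType) := Choice.copy (complex R) (can_type (@ofCK R)).

Section ComplexField.
Context {R : realFieldType}.
Implicit Types (u w z : complex R).

Definition addc z w := Complex (Re z + Re w) (Im z + Im w).
Definition oppc z := Complex (- Re z) (- Im z).

Lemma addcA : associative addc.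
Proof. by move=> [a b] [c d] [e f]; congr Complex; rewrite /= addrA. Qed.
Lemma addcC : commutative addc.
Proof. by move=> [a b] [c d]; congr Complex; rewrite /= addrC. Qed.
Lemma add0c : left_id (Complex 0 0) addc.
Proof. by move=> [a b]; congr Complex; rewrite /= add0r. Qed.
Lemma addNc : left_inverse (Complex 0 0) oppc addc.
Proof. by move=> [a b]; congr Complex; rewrite /= addNr. Qed.

HB.instance Definition _ := GRing.isZmodule.Build (complex R) addcA addcC add0c addNc.

Definition mulc z w :=
  Complex (Re z * Re w - Im z * Im w) (Re z * Im w + Im z * Re w).

Lemma mulcA : associative mulc.
Proof. by move=> [a b] [c d] [e f]; congr Complex => /=; lra. Qed.
Lemma mulcC : commutative mulc.
Proof. by move=> [a b] [c d]; congr Complex => /=; lra. Qed.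
Lemma mul1c : left_id (Complex 1 0) mulc.
Proof. by move=> [a b]; congr Complex => /=; lra. Qed.
Lemma mulcDl : left_distributive mulc +%R.
Proof. by move=> [a b] [c d] [e f]; congr Complex => /=; lra. Qed.
Lemma onec_neq0 : Complex 1 0 != 0 :> complex R.
Proof. by apply/eqP => -[] /eqP; rewrite oner_eq0. Qed.

HB.instance Definition _ := GRing.Zmodule_isComNzRing.Build (complex R)
  mulcA mulcC mul1c mulcDl onec_neq0.

Definition norm2 z := Re z ^+ 2 + Im z ^+ 2.

Lemma norm2_ge0 z : 0 <= norm2 z.
Proof. by rewrite addr_ge0 ?sqr_ge0. Qed.

Lemma norm2_eq0 z : (norm2 z == 0) = (z == 0).
Proof.
case: z => a b; rewrite /norm2 /= paddr_eq0 ?sqr_ge0 // !sqrf_eq0.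
by apply/andP/eqP => [[/eqP-> /eqP->] //|/(congr1 ofC) [-> ->]].
Qed.

Definition invc z := Complex (Re z / norm2 z) (- Im z / norm2 z).

Lemma mulVc z : z != 0 -> mulc (invc z) z = 1.
Proof.
rewrite -norm2_eq0; case: z => a b n0.
by congr Complex => /=; [rewrite -(divff n0) /norm2 /=|]; lra.
Qed.

Lemma invc0 : invc 0 = 0.
Proof. by rewrite /invc /= oppr0 !mul0r. Qed.

HB.instance Definition _ := GRing.ComNzRing_isField.Build (complex R) mulVc invc0.

Lemma norm2M z w : norm2 (z * w) = norm2 z * norm2 w.
Proof. by case: z w => a b [c d]; rewrite /norm2 /=; lra. Qed.

Lemma norm2N z : norm2 (- z) = norm2 z.
Proof. by case: z => a b; rewrite /norm2 /= !sqrrN. Qed.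

Lemma norm2B z w : norm2 (z - w) = norm2 (w - z).
Proof. by rewrite -norm2N opprB. Qed.

Lemma norm2D_le z w : norm2 (z + w) <= 2 * norm2 z + 2 * norm2 w.
Proof.
case: z w => a b [c d]; rewrite /norm2 /=.
by have := sqr_ge0 (a - c); have := sqr_ge0 (b - d); lra.
Qed.

Lemma norm2_triangle z w u : norm2 (z - u) <= 2 * norm2 (z - w) + 2 * norm2 (w - u).
Proof. by rewrite -[z - u](subrKA w) norm2D_le. Qed.

End ComplexField.


Section RotationsOfRoots.
Context {F : fieldType} {p : nat} {zeta : F}.
Hypothesis zeta_prim : p.-primitive_root zeta.

Lemma prod_sub_rot (w z : F) :
  \prod_(k < p) (w - zeta ^+ k * z) = w ^+ p - z ^+ p.
Proof.
have p0 := prim_order_gt0 zeta_prim.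
have [->|z0] := eqVneq z 0.
  rewrite expr0n gtn_eqF // subr0.
  under eq_bigr do rewrite mulr0 subr0.
  by rewrite prodr_const card_ord.
have := congr1 (horner^~ (w / z)) (factor_Xn_sub_1 zeta_prim).
rewrite horner_prod big_mkord !hornerE.
under eq_bigr do rewrite hornerXsubC.
move=> factor.
transitivity (\prod_(k < p) (z * (w / z - zeta ^+ k))).
  by apply: eq_bigr => k _; rewrite mulrBr mulrCA divff // mulr1 mulrC.
rewrite big_split /= prodr_const card_ord factor mulrBr mulr1 -exprMn.
by rewrite mulrCA divff // mulr1.
Qed.

Lemma exprM_rot k (w : F) : (zeta ^+ k * w) ^+ p = w ^+ p.
Proof. by rewrite exprMn exprAC (prim_expr_order zeta_prim) expr1n mul1r. Qed.

Lemma expr_eq_rot (w z : F) : z != 0 -> w ^+ p = z ^+ p ->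
  exists k : 'I_p, w = zeta ^+ k * z.
Proof.
move=> z0 wz; have /(prim_rootP zeta_prim)[k wk] : (w / z) ^+ p = 1.
  by rewrite expr_div_n wz divff // expf_neq0.
by exists k; rewrite -wk divfK.
Qed.

Lemma rot_exp_inj (z : F) (k l : 'I_p) : z != 0 -> zeta ^+ k * z = zeta ^+ l * z -> k = l.
Proof.
move=> z0 /(mulIf z0)/eqP; rewrite (eq_prim_root_expr zeta_prim).
by rewrite !modn_small // => /eqP/val_inj.
Qed.

End RotationsOfRoots.

Section Polar.
Variable R : realType.
Implicit Types (s t : R) (z : complex R).

Definition expi t : complex R := Complex (cos t) (sin t).

Lemma expiD s t : expi s * expi t = expi (s + t).
Proof. by rewrite /expi cosD sinD; congr Complex => /=; lra. Qed.

Lemma expiX t k : expi t ^+ k = expi (k%:R * t).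
Proof.
elim: k => [|k IH]; first by rewrite expr0 mul0r /expi cos0 sin0.
by rewrite exprS IH expiD -{1}(mul1r t) -mulrDl -natr1 addrC.
Qed.

Lemma norm2_expi t : norm2 (expi t) = 1.
Proof. exact: cos2Dsin2. Qed.

Lemma real_complex_exprn s k : Complex s 0 ^+ k = Complex (s ^+ k) 0.
Proof.
elim: k => [|k IH]; first by rewrite !expr0.
by rewrite !exprS IH; congr Complex => /=; lra.
Qed.

Lemma polar z : exists t, z = Complex (Num.sqrt (norm2 z)) 0 * expi t.
Proof.
have [->|z0] := eqVneq z 0.
  by exists 0; rewrite /norm2 /= expr0n addr0 sqrtr0; exact: (esym (mul0r _)).
case: z z0 => a b; rewrite -norm2_eq0 /norm2 /= => n0.
set r := Num.sqrt _.
have r0 : 0 < r by rewrite sqrtr_gt0 lt_def n0 addr_ge0 ?sqr_ge0.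
have rr : r ^+ 2 = a ^+ 2 + b ^+ 2 by rewrite sqr_sqrtr // addr_ge0 ?sqr_ge0.
have a_r : -1 <= a / r <= 1.
  rewrite -ler_norml normf_div (gtr0_norm r0) ler_pdivrMr // mul1r.
  by rewrite -sqrtr_sqr ler_wsqrtr // lerDl sqr_ge0.
have sin_acos_r : sin (acos (a / r)) = `|b| / r.
  have r2 : r ^+ 2 != 0 by rewrite expf_neq0 // lt0r_neq0.
  rewrite sin_acos //; have -> : 1 - (a / r) ^+ 2 = (b / r) ^+ 2.
    by rewrite !expr_div_n -(divff r2) -mulrBl rr; congr (_ / _); lra.
  by rewrite sqrtr_sqr normf_div (gtr0_norm r0).
exists (if 0 <= b then acos (a / r) else - acos (a / r)).
have cos_t : cos (if 0 <= b then acos (a / r) else - acos (a / r)) = a / r.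
  by case: ifP => _; rewrite ?cosN acosK // in_itv.
have sin_t : sin (if 0 <= b then acos (a / r) else - acos (a / r)) = b / r.
  case: ifP => b0; rewrite ?sinN sin_acos_r; first by rewrite ger0_norm.
  by rewrite ltr0_norm ?mulNr ?opprK // ltNge b0.
by rewrite /expi cos_t sin_t; congr Complex => /=; rewrite mulrC divfK ?lt0r_neq0 //; lra.
Qed.
Lemma exists_root p z : (0 < p)%N -> exists w, w ^+ p = z.
Proof.
move=> p0; have [t ->] := polar z.
have pR0 : p%:R != 0 :> R by rewrite pnatr_eq0 -lt0n.
exists (Complex (Num.sqrt (norm2 z) `^ p%:R^-1) 0 * expi (t / p%:R)).
rewrite exprMn real_complex_exprn expiX [_%:R * _]mulrC divfK // -powR_mulrn ?powR_ge0 //.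
by rewrite -powRrM mulVf // powRr1 // sqrtr_ge0.
Qed.

Definition zeta p : complex R := expi (2 * pi / p%:R).

Lemma prim_root_zeta p : prime p -> p.-primitive_root (zeta p).
Proof.
move=> p_pr; have p0 := prime_gt0 p_pr; have p1 := prime_gt1 p_pr.
have pR0 : 0 < p%:R :> R by rewrite ltr0n.
have zetap : zeta p ^+ p = 1.
  by rewrite /zeta expiX mulrC divfK ?lt0r_neq0 // /expi mulr_natl cos2pi sin2pi.
have zeta1 : zeta p != 1.
  apply/eqP => -[cos1 sin0].
  have t0 : 0 < 2 * pi / p%:R :> R by rewrite divr_gt0 // mulr_gt0 // pi_gt0.
  have [p2|p2] := eqVneq p 2.
    by move: cos1; rewrite p2 mulrC mulKf ?pnatr_eq0 // cospi => ?; lra.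
  have tpi : 2 * pi / p%:R < pi :> R.
    by rewrite ltr_pdivrMr // mulrC ltr_pM2l ?pi_gt0 // ltr_nat ltn_neqAle eq_sym p2.
  by have := @sin_gt0_pi R (2 * pi / p%:R); rewrite t0 tpi sin0 ltxx => /(_ isT).
have [m m_prim /(primeP p_pr).2 /predU1P[m1|/eqP mp]] := prim_order_exists p0 zetap.
  by move: (prim_expr_order m_prim); rewrite m1 expr1 => /eqP; rewrite (negbTE zeta1).
by move: m_prim; rewrite mp.
Qed.

End Polar.

Section PlaneDistance.
Context {R : realType}.
Local Notation RR := (R * R)%type.
Implicit Types (e h : R) (w x y z : RR).

Lemma toC_inj : injective (@toC R). Proof. exact: can_inj toCK. Qed.
Lemma toC_eq0 w : (toC w == 0) = (w == 0). Proof. exact: (inj_eq toC_inj w 0). Qed.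

(* The squared Euclidean distance; it only satisfies the weak triangle
   inequality [cdist_triangle], which is all that is needed. *)
Definition cdist x y : R := norm2 (toC x - toC y).

Lemma cdistxx x : cdist x x = 0.
Proof. by rewrite /cdist subrr; apply/eqP; rewrite norm2_eq0. Qed.

Lemma cdistC x y : cdist x y = cdist y x.
Proof. exact: norm2B. Qed.

Lemma cdist_triangle x y z : cdist x z <= 2 * cdist x y + 2 * cdist y z.
Proof. exact: norm2_triangle. Qed.

Lemma cdist_gt0 x y : (0 < cdist x y) = (x != y).
Proof. by rewrite lt_def norm2_ge0 andbT norm2_eq0 subr_eq0 (inj_eq toC_inj). Qed.

Lemma ball_pairE x h y : ball x h y <-> `|x.1 - y.1| < h /\ `|x.2 - y.2| < h.
Proof. by rewrite /ball /= /prod_ball -!ball_normE. Qed.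

Lemma sqr_lt_of_norm_lt (t h : R) : h <= 1 -> `|t| < h -> t ^+ 2 < h.
Proof.
move=> h1 th; rewrite -real_normK ?num_real // expr2.
have t1 : `|t| <= 1 by rewrite (le_trans (ltW th)).
by rewrite (le_lt_trans _ th) // ler_piMr.
Qed.

Lemma ball_sub_cdist e : 0 < e ->
  exists2 h, 0 < h & forall x y, ball x h y -> cdist x y < e.
Proof.
move=> e0; exists (Num.min 1 (e / 4)) => [|x y]; first by rewrite lt_min ltr01 divr_gt0.
have h1 : Num.min 1 (e / 4) <= 1 by rewrite ge_min lexx.
have he : Num.min 1 (e / 4) <= e / 4 by rewrite ge_min lexx orbT.
rewrite ball_pairE /cdist /norm2 /= => -[/(sqr_lt_of_norm_lt _ _ h1) a_small /(sqr_lt_of_norm_lt _ _ h1)].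
by move: a_small he; set h := Num.min _ _; lra.
Qed.

Lemma nbhs_cdist x (A : set RR) : nbhs x A -> exists2 e, 0 < e & forall y, cdist x y < e -> A y.
Proof.
move=> /nbhs_ballP[h h0 hA]; exists (h ^+ 2) => [|y]; first exact: exprn_gt0.
have lt_h (t : R) : t ^+ 2 < h ^+ 2 -> `|t| < h.
  by move=> th; rewrite -ltr_sqr ?nnegrE ?normr_ge0 ?(ltW h0) // real_normK ?num_real.
rewrite /cdist /norm2 /= => small; apply/hA/ball_pairE.
by split; apply: lt_h; apply: le_lt_trans small; rewrite ?lerDl ?lerDr sqr_ge0.
Qed.

End PlaneDistance.

Section ConfigurationSpaces.
Context {X : topologicalType} {n : nat}.
Implicit Types (Y : set X) (x : 'I_n -> X).

Lemma range_nth (s : seq X) w0 : size s = n ->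
  range (fun i : 'I_n => nth w0 s i) = [set w | w \in s].
Proof.
move=> sn; apply/seteqP; split => w.
  by case=> i _ <-; rewrite /= mem_nth // sn.
by move=> /(nthP w0)[i]; rewrite sn => ilt <-; exists (Ordinal ilt).
Qed.

Lemma conf_ord_nth Y (s : seq X) w0 : uniq s -> size s = n ->
  (forall w, w \in s -> Y w) -> conf_ord Y n (fun i : 'I_n => nth w0 s i).
Proof.
move=> s_uniq sn sY; split => [i j /eqP|i]; last by apply: sY; rewrite mem_nth // sn.
by rewrite nth_uniq ?sn // => /eqP/val_inj.
Qed.

Lemma card_range_inj {m} {x : 'I_m -> X} {y : 'I_n -> X} :
  injective x -> injective y -> range x = range y -> m = n.
Proof.
move=> x_inj y_inj xy.
have mem_codom k (z : 'I_k -> X) w : (w \in codom z) = `[< range z w >].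
  by apply/codomP/asboolP => [[i ->]|[i _ <-]]; [exists i | exists i].
have same_codom : codom x =i codom y by move=> w; rewrite !mem_codom xy.
rewrite -(card_ord m) -(card_ord n) -(size_codom x) -(size_codom y).
apply/esym/eqP; rewrite -(uniq_size_uniq (introT (injectiveP x) x_inj) same_codom).
exact/injectiveP.
Qed.
(* [prodn_open n O] unfolds to [forall x, O x -> box_near x O]. *)
Definition box_near (x : 'I_n -> X) (P : set ('I_n -> X)) :=
  exists B : 'I_n -> set X,
    (forall i, open (B i) /\ B i (x i)) /\ forall y, (forall i, B i (y i)) -> P y.

Lemma box_near_self x P : box_near x P -> P x.
Proof. by case=> B [Bx BP]; apply: BP => i; case: (Bx i). Qed.

Lemma box_nearS x (P Q : set ('I_n -> X)) : P `<=` Q -> box_near x P -> box_near x Q.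
Proof. by move=> PQ [B [Bx BP]]; exists B; split => // y /BP/PQ. Qed.

Lemma box_near_box_near {x P} :
  box_near x P -> box_near x (box_near^~ P).
Proof.
case=> B [Bx BP]; exists B; split => // y By.
by exists B; split => // i; split; [case: (Bx i) | apply: By].
Qed.

Lemma box_near_reorder {Y} (Q : set X -> Prop) {x x' : 'I_n -> X} :
  conf_ord Y n x -> conf_ord Y n x' -> range x = range x' ->
  box_near x (fun y => conf_ord Y n y -> Q (range y)) ->
  box_near x' (fun y => conf_ord Y n y -> Q (range y)).
Proof.
move=> [x_inj _] [x'_inj _] xx' [B [Bx BQ]].
have x_onto i : exists j, x j = x' i.
  have [j _ xj] : range x (x' i) by rewrite xx'; exists i.
  by exists j.
have x'_onto j : exists i, x' i = x j.
  have [i _ x'i] : range x' (x j) by rewrite -xx'; exists j.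
  by exists i.
have [s xs] := choice x_onto; have [t x't] := choice x'_onto.
have sK : cancel s t by move=> i; apply: x'_inj; rewrite x't xs.
have tK : cancel t s by move=> j; apply: x_inj; rewrite xs x't.
exists (B \o s); split => [i|y By [y_inj yY]].
  by case: (Bx (s i)) => oB Bxs; split => //=; rewrite -xs.
have -> : range y = range (y \o t).
  by apply/seteqP; split=> w [i _ <-]; [exists (s i); rewrite //= sK | exists (t i)].
apply: BQ => [j|]; first by rewrite /= -{1}(tK j); apply: By.
by split=> [i j /y_inj /(can_inj tK)|i]; last exact: yY.
Qed.

Lemma conf_opensP {Y} {U : set (set X)} : U `<=` conf Y n ->
  conf_opens Y n U <->
  forall x, conf_ord Y n x -> U (range x) ->
    box_near x (fun y => conf_ord Y n y -> U (range y)).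
Proof.
move=> UY; split => [[_ [V [V_open VU]]] x xY Ux|U_near].
  have [B [Bx BV]] : box_near x V.
    apply: V_open; suff : (V `&` conf_ord Y n) x by case.
    by rewrite VU.
  exists B; split => // y By yY.
  suff : ((fun z => range z) @^-1` U `&` conf_ord Y n) y by case.
  by rewrite -VU; split => //; apply: BV.
split => //; exists [set x | box_near x (fun y => conf_ord Y n y -> U (range y))].
split; first by move=> x /box_near_box_near.
apply/seteqP; split => x [Vx xY]; split => //.
  exact: box_near_self Vx xY.
exact: U_near.
Qed.

Lemma subspace_conf_opens Y (A U : set (set X)) :
  A `<=` conf Y n -> U `<=` A ->
  (forall x, conf_ord Y n x -> U (range x) ->
     box_near x (fun y => conf_ord Y n y -> A (range y) -> U (range y))) ->
  subspace_opens A (conf_opens Y n) U.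
Proof.
move=> AY UA U_near.
pose near_U S := forall x, conf_ord Y n x -> range x = S ->
  box_near x (fun y => conf_ord Y n y -> A (range y) -> U (range y)).
exists (conf Y n `&` near_U); split.
  apply/conf_opensP => [S []//|x xY [_ near_x]].
  apply: box_nearS (box_near_box_near (near_x x xY erefl)) => y y_near yY.
  split; first by exists y.
  move=> x' x'Y x'y.
  exact: (box_near_reorder (fun S => A S -> U S) yY x'Y (esym x'y) y_near).
apply/seteqP; split => S.
  move=> US; have AS := UA S US; split => //; split; first exact: AY.
  by move=> x xY xS; apply: U_near; rewrite ?xS.
case=> -[[x xY <-] near_S] AS.
exact: box_near_self (near_S x xY erefl) xY AS.
Qed.

End ConfigurationSpaces.

Lemma uniform_radius {R : realDomainType} (I : finType) (T : Type) (D : I -> T -> R) (Q : I -> T -> Prop) :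
  (forall i, exists2 d, 0 < d & forall t, D i t < d -> Q i t) ->
  exists2 d, 0 < d & forall i t, D i t < d -> Q i t.
Proof.
move=> radius; have [d dP] : {d : I -> R & forall i, 0 < d i /\ forall t, D i t < d i -> Q i t}.
  apply: (@choice _ _ (fun i e => 0 < e /\ forall t, D i t < e -> Q i t)) => i.
  by have [d d0 dQ] := radius i; exists d.
exists (\big[Num.min/1]_i d i) => [|i t Dt].
  by apply: (big_ind (fun e => 0 < e)) => // [e e' e0 e'0|i _]; [rewrite lt_min e0 | case: (dP i)].
by apply: (dP i).2; apply: (lt_le_trans Dt); rewrite (bigD1 i) //= ge_min lexx.
Qed.

Section PlaneBoxes.
Context {R : realType}.
Local Notation RR := (R * R)%type.

Lemma box_near_cdistP n (x : 'I_n -> RR) (P : set ('I_n -> RR)) :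
  box_near x P <-> exists2 e, 0 < e & forall y, (forall i, cdist (x i) (y i) < e) -> P y.
Proof.
split => [[B [Bx BP]]|[e e0 eP]].
  have [|e e0 eB] := uniform_radius _ _ (fun i w => cdist (x i) w) B.
    by move=> i; case: (Bx i) => oB Bxi; apply: nbhs_cdist; apply: open_nbhs_nbhs.
  by exists e => // y near_x; apply: BP => i; apply: eB.
have [h h0 hsub] := ball_sub_cdist _ e0.
exists (fun i => ball (x i) h); split => [i|y yx]; first by split; [exact: ball_open | exact: ballxx].
by apply: eP => i; apply: hsub.
Qed.

Lemma separated {I : finType} {y : I -> RR} : injective y ->
  exists2 d, 0 < d & forall a b, cdist (y a) (y b) < d -> a = b.
Proof.
move=> y_inj.
have [|d d0 dP] := uniform_radius _ unit
  (fun ab _ => cdist (y ab.1) (y ab.2)) (fun ab _ => ab.1 = ab.2).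
  move=> [a b]; have [->|ab] := eqVneq a b; first by exists 1.
  by exists (cdist (y a) (y b)) => [|_]; rewrite ?cdist_gt0 ?(inj_eq y_inj) ?ltxx.
by exists d => // a b /(dP (a, b) tt).
Qed.

End PlaneBoxes.

Lemma eq_muln_add_bool {p a b} {c d : bool} : (1 < p)%N ->
  (p * a + c = p * b + d)%N -> a = b /\ c = d.
Proof.
move=> p1 e; have cd : c = d :> nat.
  have := congr1 (modn^~ p) e; rewrite /= ![(p * _)%N]mulnC !modnMDl.
  by rewrite !modn_small // (leq_ltn_trans (leq_b1 _)).
split; last by move: cd; clear e; case: c; case: d.
by move: e; rewrite cd => /addIn/eqP; rewrite eqn_pmul2l ?(ltnW p1) // => /eqP.
Qed.

Section PowerMap.
Variables (R : realType) (p : nat).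
Hypothesis p_pr : prime p.
Local Notation zeta := (zeta R p).
Implicit Types (d e : R).

Let p_gt0 : (0 < p)%N := prime_gt0 p_pr.
Let zeta_prim : p.-primitive_root zeta := prim_root_zeta R p p_pr.

Lemma norm2_zetaX k : norm2 (zeta ^+ k) = 1.
Proof. by rewrite /zeta expiX norm2_expi. Qed.

Lemma norm2_prod (I : Type) (r : seq I) (F : I -> complex R) :
  norm2 (\prod_(i <- r) F i) = \prod_(i <- r) norm2 (F i).
Proof. by apply: big_morph => [z w|]; rewrite ?norm2M // /norm2 /= expr1n expr0n addr0. Qed.

Lemma near_root {d} {u z : complex R} : 0 < d -> norm2 (u - z ^+ p) < d ^+ p ->
  exists2 w, w ^+ p = u & norm2 (w - z) < d.
Proof.
move=> d0; have [w1 <-] := exists_root R p u p_gt0.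
rewrite -(prod_sub_rot zeta_prim) norm2_prod => small.
(* One of the p factors of the small product must be small. *)
have [k close] : exists k : 'I_p, norm2 (w1 - zeta ^+ k * z) < d.
  apply: contrapT => far; move: small; apply/negP; rewrite -leNgt.
  have : \prod_(k < p) d <= \prod_(k < p) norm2 (w1 - zeta ^+ k * z).
    apply: ler_prod => k _; rewrite (ltW d0) leNgt; apply/negP => close.
    by apply: far; exists k.
  by rewrite prodr_const card_ord.
have zk0 : zeta ^+ k != 0 by rewrite -norm2_eq0 norm2_zetaX oner_neq0.
exists (w1 / zeta ^+ k); first by rewrite expr_div_n exprAC (prim_expr_order zeta_prim) expr1n divr1.
by rewrite -[norm2 _]mul1r -(norm2_zetaX k) -norm2M mulrBr mulrCA divff // mulr1.
Qed.

Lemma exprn_norm2_continuous (z : complex R) e : 0 < e ->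
  exists2 d, 0 < d & forall w : complex R, norm2 (w - z) < d -> norm2 (w ^+ p - z ^+ p) < e.
Proof.
(* Besides the factor w - z, each factor of prod_k (w - zeta^k z) is at most M. *)
move=> e0; pose M := 2 + 8 * norm2 z.
have M0 : 0 < M ^+ p.-1 by rewrite exprn_gt0 // /M; have := norm2_ge0 z; lra.
exists (Num.min 1 (e / M ^+ p.-1)) => [|w]; first by rewrite lt_min ltr01 divr_gt0.
rewrite lt_min => /andP[w_near1 w_near].
rewrite -(prod_sub_rot zeta_prim) norm2_prod (bigD1 (Ordinal p_gt0)) //= expr0 mul1r.
have far_factors : \prod_(k < p | k != Ordinal p_gt0) norm2 (w - zeta ^+ k * z) <= M ^+ p.-1.
  rewrite -[in M ^+ _](card_ord p) -(cardC1 (Ordinal p_gt0)) -prodr_const.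
  apply: ler_prod => k _; rewrite norm2_ge0 /M.
  have := norm2_triangle w z (zeta ^+ k * z).
  have := norm2D_le z (- (zeta ^+ k * z)); rewrite norm2N norm2M norm2_zetaX mul1r.
  lra.
apply: (le_lt_trans (ler_wpM2l (norm2_ge0 _) far_factors)).
by rewrite -ltr_pdivlMr.
Qed.

Local Notation RR := (R * R)%type.
Implicit Types (u v w : RR).

Definition rot k w : RR := ofC (zeta ^+ k * toC w).
Definition pw w : RR := ofC (toC w ^+ p).

Lemma toC_rot k w : toC (rot k w) = zeta ^+ k * toC w. Proof. exact: ofCK. Qed.
Lemma toC_pw w : toC (pw w) = toC w ^+ p. Proof. exact: ofCK. Qed.
Lemma rotC_rot1 w : rotC p w = rot 1 w.
Proof. by apply: toC_inj; rewrite toC_rot expr1; congr Complex; rewrite /= addrC. Qed.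

Lemma rotD k l w : rot k (rot l w) = rot (k + l) w.
Proof. by apply: toC_inj; rewrite !toC_rot mulrA -exprD. Qed.

Lemma rot0 w : rot 0 w = w.
Proof. by apply: toC_inj; rewrite toC_rot expr0 mul1r. Qed.

Lemma rotp w : rot p w = w.
Proof. by apply: toC_inj; rewrite toC_rot (prim_expr_order zeta_prim) mul1r. Qed.

Lemma rot_eq0 k w : (rot k w == 0) = (w == 0).
Proof.
by rewrite -!toC_eq0 toC_rot mulf_eq0 -norm2_eq0 norm2_zetaX oner_eq0.
Qed.

Lemma pw_rot k w : pw (rot k w) = pw w.
Proof. by apply: toC_inj; rewrite !toC_pw toC_rot (exprM_rot zeta_prim). Qed.

Lemma pw_eq0 w : (pw w == 0) = (w == 0).
Proof. by rewrite -!toC_eq0 toC_pw expf_eq0 prime_gt0. Qed.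

Lemma pw_eq_rot {v w} : w != 0 -> pw v = pw w -> exists k : 'I_p, v = rot k w.
Proof.
rewrite -toC_eq0 => w0 /(congr1 toC); rewrite !toC_pw => /(expr_eq_rot zeta_prim _ _ w0)[k vk].
by exists k; apply: toC_inj; rewrite toC_rot.
Qed.

Lemma rot_inj {w} : w != 0 -> injective (fun k : 'I_p => rot k w).
Proof.
rewrite -toC_eq0 => w0 k l /(congr1 toC); rewrite !toC_rot; exact: rot_exp_inj.
Qed.

Lemma rot1_eq w : (rot 1 w == w) = (w == 0).
Proof.
apply/eqP/eqP => [rot1w|->]; last by apply/eqP; rewrite rot_eq0.
apply/eqP/negP => /negP w0; suff : 1%N = 0%N by [].
have := rot_inj w0 (Ordinal (prime_gt1 p_pr)) (Ordinal (prime_gt0 p_pr)).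
by rewrite /= rot0 => /(_ rot1w)/(congr1 val).
Qed.

Lemma pw_surj u : exists w, pw w = u.
Proof.
have [w wu] := exists_root R p (toC u) (prime_gt0 p_pr).
by exists (ofC w); apply: toC_inj; rewrite toC_pw ofCK wu.
Qed.

Lemma cdist_rot k v w : cdist (rot k v) (rot k w) = cdist v w.
Proof. by rewrite /cdist !toC_rot -mulrBr norm2M norm2_zetaX // mul1r. Qed.

Lemma cdist_near_root {d v u} : 0 < d -> cdist (pw v) u < d ^+ p ->
  exists2 w, pw w = u & cdist v w < d.
Proof.
rewrite cdistC /cdist toC_pw => d0 /(near_root d0)[w wu vw].
by exists (ofC w); [apply: toC_inj; rewrite toC_pw ofCK | rewrite ofCK norm2B].
Qed.

Lemma pw_continuous v e : 0 < e ->
  exists2 d, 0 < d & forall w, cdist v w < d -> cdist (pw v) (pw w) < e.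
Proof.
move=> /(exprn_norm2_continuous (toC v))[d d0 near_v].
by exists d => // w vw; rewrite cdistC /cdist !toC_pw near_v // norm2B.
Qed.

Implicit Types (S T : set RR) (b : bool).

Lemma CstarE w : Cstar R w <-> w != 0.
Proof. by split => [/eqP|/eqP]. Qed.

Definition rot_stable S := forall w, S w -> S (rot 1 w).

Lemma rot_stableX S k w : rot_stable S -> S w -> S (rot k w).
Proof.
move=> S_stable Sw; elim: k => [|k IH]; first by rewrite rot0.
by rewrite -add1n -rotD; apply: S_stable.
Qed.

Lemma rot_fixedP S : rotC p @` S = S <-> rot_stable S.
Proof.
split => [fixed w Sw|S_stable]; first by rewrite -fixed; exists w => //; apply: rotC_rot1.
apply/seteqP; split => [_ [w Sw <-]|w Sw]; first by rewrite rotC_rot1; apply: S_stable.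
exists (rot p.-1 w); first exact: rot_stableX.
by rewrite rotC_rot1 rotD add1n prednK ?prime_gt0 // rotp.
Qed.

Definition pow_set S : set RR := pw @` (S `&` Cstar R).
Definition root_set b T : set RR := pw @^-1` T `|` [set w | b /\ w = 0].

Lemma rot_stable_root_set b T : rot_stable (root_set b T).
Proof.
move=> w [Tw|[b1 ->]]; first by left; rewrite /= pw_rot.
by right; split => //; apply/eqP; rewrite rot_eq0.
Qed.

Lemma root_set_pow_set S : rot_stable S -> root_set `[< S 0 >] (pow_set S) = S.
Proof.
move=> S_stable; apply/seteqP; split => w.
  case=> [[v [Sv /CstarE v0] vw]|[/asboolP S0 ->] //].
  by have [k ->] := pw_eq_rot v0 (esym vw); apply: rot_stableX.
move=> Sw; have [w0|w0] := eqVneq w 0; first by subst; right; split => //; apply/asboolP.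
by left; exists w => //; split => //; apply/CstarE.
Qed.

Lemma pow_set_root_set b T : T `<=` Cstar R -> pow_set (root_set b T) = T.
Proof.
move=> TC; apply/seteqP; split => u.
  by case=> w [[Tw|[_ w0]] Cw] <- //; case: Cw; rewrite w0.
move=> Tu; have [w wu] := pw_surj u.
exists w => //; split; first by left; rewrite /= wu.
by apply/CstarE; rewrite -pw_eq0 wu; apply/CstarE/TC.
Qed.

Definition root_orbits {q} b (r : 'I_q -> RR) : seq RR :=
  codom (fun ik : 'I_q * 'I_p => rot ik.2 (r ik.1)) ++ nseq b 0.

Definition root_config {q} b (r : 'I_q -> RR) : 'I_(p * q + b) -> RR :=
  fun a => nth 0 (root_orbits b r) a.

Lemma size_root_orbits q b (r : 'I_q -> RR) : size (root_orbits b r) = (p * q + b)%N.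
Proof. by rewrite size_cat size_codom card_prod !card_ord size_nseq mulnC. Qed.

Lemma cdist_root_config q b (r r' : 'I_q -> RR) e : 0 < e ->
  (forall i, cdist (r i) (r' i) < e) ->
  forall a, cdist (root_config b r a) (root_config b r' a) < e.
Proof.
move=> e0 rr' a; rewrite /root_config /root_orbits !nth_cat !size_codom.
case: ifP => a_small; last by rewrite !nth_nseq; case: ifP; rewrite cdistxx.
have -> : nat_of_ord a = Ordinal a_small by [].
by rewrite !nth_codom cdist_rot.
Qed.

Section RootConfiguration.
Context {q : nat} {x r : 'I_q -> RR} (b : bool).
Hypotheses (x_conf : conf_ord (Cstar R) q x) (r_root : forall i, pw (r i) = x i).

Let r_neq0 i : r i != 0.
Proof. by rewrite -pw_eq0 r_root; apply/CstarE; case: x_conf. Qed.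

Lemma root_orbits_uniq : uniq (root_orbits b r).
Proof.
rewrite cat_uniq; apply/and3P; split.
- apply/injectiveP => -[i k] [j l] /= eq_rot.
  have ij : i = j by apply: x_conf.1; rewrite -!r_root -(pw_rot k) eq_rot pw_rot.
  by move: eq_rot; rewrite ij => /(rot_inj (r_neq0 j)) ->.
- apply/hasPn => w /nseqP[-> _]; apply/codomP => -[[i k] /esym/eqP].
  by rewrite rot_eq0 (negbTE (r_neq0 i)).
- by case: b.
Qed.

Lemma mem_root_orbits w : w \in root_orbits b r <-> root_set b (range x) w.
Proof.
rewrite mem_cat; split => [/orP[/codomP[[i k] ->]|/nseqP[-> b1]]|].
- by left; exists i; rewrite //= pw_rot.
- by right; split => //; case: (b) b1.
case=> [[i _ xw]|[b1 ->]]; last by rewrite mem_nseq b1 eqxx orbT.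
have [k ->] := pw_eq_rot (r_neq0 i) (etrans (esym xw) (esym (r_root i))).
by apply/orP; left; apply/codomP; exists (i, k).
Qed.

Lemma root_config_conf :
  conf_ord setT (p * q + b) (root_config b r) /\ range (root_config b r) = root_set b (range x).
Proof.
split; first by apply: conf_ord_nth; rewrite ?root_orbits_uniq ?size_root_orbits.
rewrite range_nth ?size_root_orbits //.
by apply/seteqP; split => w /mem_root_orbits.
Qed.

End RootConfiguration.

Lemma root_set_conf_ord {q} b {x : 'I_q -> RR} : conf_ord (Cstar R) q x ->
  exists y : 'I_(p * q + b) -> RR, conf_ord setT (p * q + b) y /\ range y = root_set b (range x).
Proof.
move=> x_conf; have [r r_root] := choice (fun i => pw_surj (x i)).
by exists (root_config b r); apply: root_config_conf.
Qed.

Lemma pow_set_finite {m} {y : 'I_m -> RR} : injective y ->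
  exists k (x : 'I_k -> RR), conf_ord (Cstar R) k x /\ range x = pow_set (range y).
Proof.
move=> y_inj; pose t := undup [seq pw w | w <- codom y & w != 0].
have mem_t u : u \in t <-> pow_set (range y) u.
  rewrite mem_undup; split => [/mapP[w]|[w [[i _ <-] /CstarE y0] <-]].
    rewrite mem_filter => /andP[w0 /codomP[i wi]] ->; subst w.
    by exists (y i) => //; split; [exists i | apply/CstarE].
  by apply/mapP; exists (y i); rewrite // mem_filter y0 codom_f.
exists (size t), (fun i => nth 0 t i); split; last first.
  by rewrite range_nth //; apply/seteqP; split => u /mem_t.
apply: conf_ord_nth; rewrite ?undup_uniq // => u /mem_t[w [_ /CstarE w0] <-].
by apply/CstarE; rewrite pw_eq0.
Qed.

Lemma conf_pow_set {q b S} : fixed_conf R p (p * q + b) S ->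
  conf (Cstar R) q (pow_set S) /\ (S 0 <-> b).
Proof.
case=> -[y [y_inj _] <-] /rot_fixedP y_stable.
(* range y is also enumerated, by root_set_conf_ord, with p k + [range y 0] points. *)
have [k [x [x_conf x_range]]] := pow_set_finite y_inj.
have [y' [[y'_inj _] y'_range]] := root_set_conf_ord `[< range y 0 >] x_conf.
have : range y' = range y by rewrite y'_range x_range root_set_pow_set.
move=> /(card_range_inj y'_inj y_inj)/(eq_muln_add_bool (prime_gt1 p_pr))[kq y0b].
subst k; split; first by exists x.
by split => [/asboolP|b1]; [rewrite y0b | apply/asboolP; rewrite y0b].
Qed.

Lemma fixed_root_set q b T : conf (Cstar R) q T -> fixed_conf R p (p * q + b) (root_set b T).
Proof.
case=> x x_conf <-; have [y [y_conf y_range]] := root_set_conf_ord b x_conf.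
by split; [exists y | apply/rot_fixedP/rot_stable_root_set].
Qed.

Section CloseFixedConfigurations.
Context {n : nat} {y z : 'I_n -> RR} {s : R}.
Hypotheses (y_sep : forall a a', cdist (y a) (y a') < s -> a = a')
  (z_close : forall a, cdist (y a) (z a) < s / 4)
  (y_stable : rot_stable (range y)) (z_stable : rot_stable (range z)).

Lemma close_rot_index k a a' a'' :
  z a' = rot k (z a) -> y a'' = rot k (y a) -> a' = a''.
Proof.
move=> za' ya''; apply: y_sep; apply: (le_lt_trans (cdist_triangle _ (z a') _)).
have -> : cdist (z a') (y a'') = cdist (y a) (z a) by rewrite za' ya'' cdist_rot cdistC.
by have := z_close a; have := z_close a'; lra.
Qed.

Let rot1_index {S : 'I_n -> RR} : rot_stable (range S) -> forall a, exists a', S a' = rot 1 (S a).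
Proof. by move=> S_stable a; have [|a' _] := S_stable (S a); [exists a | exists a']. Qed.

Lemma close_eq0 a : (z a == 0) = (y a == 0).
Proof.
apply/eqP/eqP => [za0|ya0].
  have [a'' ya''] := rot1_index y_stable a.
  have aa'' : a = a''.
    by apply: (close_rot_index 1 a) ya''; rewrite za0; apply/esym/eqP; rewrite rot_eq0.
  by apply/eqP; rewrite -rot1_eq {2}aa'' ya''.
have [a' za'] := rot1_index z_stable a.
have : a' = a by apply: (close_rot_index 1 a) za' _; apply/esym/eqP; rewrite ya0 rot_eq0.
by move=> a'a; apply/eqP; rewrite -rot1_eq -za' a'a.
Qed.

Lemma close_pw_eq a a' : y a' != 0 -> (pw (z a) == pw (z a')) = (pw (y a) == pw (y a')).
Proof.
move=> ya'0; have za'0 : z a' != 0 by rewrite close_eq0.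
apply/eqP/eqP => [/(pw_eq_rot za'0)[k za]|/(pw_eq_rot ya'0)[k ya]].
  have [a'' _ ya''] : range y (rot k (y a')) by apply: rot_stableX => //; exists a'.
  by rewrite (close_rot_index k a' a a'' za ya'') ya'' pw_rot.
have [a'' _ za''] : range z (rot k (z a')) by apply: rot_stableX => //; exists a'.
by rewrite -(close_rot_index k a' a'' a za'' ya) za'' pw_rot.
Qed.

End CloseFixedConfigurations.

Lemma root_set_near {q b} {x0 r0 : 'I_q -> RR} {P : set ('I_(p * q + b) -> RR)} :
  (forall i, pw (r0 i) = x0 i) -> box_near (root_config b r0) P ->
  box_near x0 (fun x => exists2 r, forall i, pw (r i) = x i & P (root_config b r)).
Proof.
move=> r0_root /box_near_cdistP[e e0 eP]; apply/box_near_cdistP.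
exists (e ^+ p) => [|x x_near]; first exact: exprn_gt0.
have [r r_near] : {r : 'I_q -> RR & forall i, pw (r i) = x i /\ cdist (r0 i) (r i) < e}.
  apply: (@choice _ _ (fun i w => pw w = x i /\ cdist (r0 i) w < e)) => i.
  have [|w wx r0w] := cdist_near_root e0 (_ : cdist (pw (r0 i)) (x i) < e ^+ p).
    by rewrite r0_root.
  by exists w.
exists r => [i|]; first by case: (r_near i).
by apply: eP; apply: cdist_root_config => // i; case: (r_near i).
Qed.

Lemma pow_set_near {n q} {y0 : 'I_n -> RR} {x0 : 'I_q -> RR} {P : set ('I_q -> RR)} :
  injective y0 -> rot_stable (range y0) ->
  conf_ord (Cstar R) q x0 -> range x0 = pow_set (range y0) -> box_near x0 P ->
  box_near y0 (fun z => rot_stable (range z) ->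
    exists x, [/\ conf_ord (Cstar R) q x, range x = pow_set (range z) & P x]).
Proof.
move=> y0_inj y0_stable [x0_inj _] x0_range /box_near_cdistP[e e0 eP].
have [j j_root] : {j : 'I_q -> 'I_n & forall i, y0 (j i) != 0 /\ pw (y0 (j i)) = x0 i}.
  apply: (@choice _ _ (fun i a => y0 a != 0 /\ pw (y0 a) = x0 i)) => i.
  have : pow_set (range y0) (x0 i) by rewrite -x0_range; exists i.
  by case=> _ [[a _ <-] /CstarE y0a] ya; exists a.
have [|d d0 d_near] := uniform_radius _ _ (fun i w => cdist (y0 (j i)) w)
    (fun i w => cdist (x0 i) (pw w) < e).
  by move=> i; rewrite -(j_root i).2; apply: pw_continuous.
have [s s0 y0_sep] := separated y0_inj.
apply/box_near_cdistP; exists (Num.min d (s / 4)) => [|z z_near z_stable].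
  by rewrite lt_min d0 divr_gt0.
have z_close a : cdist (y0 a) (z a) < s / 4 by move: (z_near a); rewrite lt_min => /andP[].
have zj0 i : z (j i) != 0 by rewrite (close_eq0 y0_sep z_close y0_stable z_stable) (j_root i).1.
have close_pw a i : pw (z a) = pw (z (j i)) <-> pw (y0 a) = x0 i.
  have := close_pw_eq y0_sep z_close y0_stable z_stable a (j i) (j_root i).1.
  by rewrite -(j_root i).2 => E; split => /eqP; [rewrite E | rewrite -E] => /eqP.
exists (fun i => pw (z (j i))); split.
- split => [i i'|i]; last by apply/CstarE; rewrite pw_eq0.
  by move=> /= /close_pw; rewrite (j_root i).2 => /x0_inj.
- apply/seteqP; split => [_ [i _ <-]|_ [_ [[a _ <-] /CstarE za0] <-]].
    by exists (z (j i)) => //; split; [exists (j i) | apply/CstarE].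
  have y0a0 : y0 a != 0 by rewrite -(close_eq0 y0_sep z_close y0_stable z_stable).
  have : pow_set (range y0) (pw (y0 a)) by exists (y0 a) => //; split; [exists a | apply/CstarE].
  by rewrite -x0_range => -[i _ /esym/close_pw ->]; exists i.
- by apply: eP => i; apply: d_near; move: (z_near (j i)); rewrite lt_min => /andP[].
Qed.

Lemma root_set_continuous q b O : fixed_conf_opens R p (p * q + b) O ->
  conf_opens (Cstar R) q (root_set b @^-1` O `&` conf (Cstar R) q).
Proof.
case=> V [V_open ->]; apply/conf_opensP => [T []//|x x_conf [[V_root_set _] _]].
have [r0 r0_root] := choice (fun i => pw_surj (x i)).
have [y0_conf y0_range] := root_config_conf b x_conf r0_root.
have := (conf_opensP V_open.1).1 V_open _ y0_conf.
rewrite y0_range => /(_ V_root_set)/(root_set_near r0_root).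
apply: box_nearS => x' [r r_root V_r] x'_conf.
have [r_conf r_range] := root_config_conf b x'_conf r_root.
have x'_T : conf (Cstar R) q (range x') by exists x'.
by split => //; split; [rewrite -r_range; apply: V_r | apply: fixed_root_set].
Qed.

Lemma pow_set_continuous q b O' : conf_opens (Cstar R) q O' ->
  fixed_conf_opens R p (p * q + b) (pow_set @^-1` O' `&` fixed_conf R p (p * q + b)).
Proof.
move=> O'_open; apply: subspace_conf_opens => [S [] //|S [] //|y y_conf [pow_set_y y_fixed]].
have [[x x_conf x_range] _] := conf_pow_set y_fixed.
have := (conf_opensP O'_open.1).1 O'_open _ x_conf.
rewrite x_range => /(_ pow_set_y).
move/(pow_set_near y_conf.1 ((rot_fixedP _).1 y_fixed.2) x_conf x_range).
apply: box_nearS => z z_near z_conf z_fixed; split => //.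
have [x' [x'_conf x'_range O'_x']] := z_near ((rot_fixedP _).1 z_fixed.2).
by rewrite /preimage /= -x'_range; apply: O'_x'.
Qed.

Lemma fixed_conf_homeomorphic q b :
  homeomorphic (fixed_conf R p (p * q + b)) (fixed_conf_opens R p (p * q + b))
               (conf (Cstar R) q) (conf_opens (Cstar R) q).
Proof.
exists pow_set, (root_set b); split; [|split; [|split; [|split; [|split]]]].
- by move=> S /conf_pow_set[].
- exact: fixed_root_set.
- move=> S S_fixed; have [_ S0_b] := conf_pow_set S_fixed.
  rewrite -(asbool_equiv_eqP idP S0_b).
  by apply: root_set_pow_set; apply/rot_fixedP; case: S_fixed.
- by move=> _ [x [_ xC] <-]; apply: pow_set_root_set => _ [i _ <-].
- exact: pow_set_continuous.
- exact: root_set_continuous.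
Qed.

End PowerMap.

Theorem mainTheorem11 (R : realType) (p q n : nat) :
  prime p -> (n = p * q \/ n = p * q + 1)%N ->
  homeomorphic (fixed_conf R p n) (fixed_conf_opens R p n)
               (conf (Cstar R) q) (conf_opens (Cstar R) q).
Proof.
move=> p_pr [->|->]; last exact: (fixed_conf_homeomorphic R p p_pr q true).
by rewrite -[(p * q)%N]addn0; exact: (fixed_conf_homeomorphic R p p_pr q false).
Qed.
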